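(* Let $n\ge r\ge2$ be integers. Then $$B_n^{(r)}(x)=-2\,r^{n-1}\sum_{\substack{k\ge0\\ 2k+1\le r-1}}r^{-2k}\,\frac{s(r,r-2k-1)}{2k+1}\,\frac{\binom{n}{2k}}{\binom{r-1}{2k+1}}\,B_{n-2k}\!\left(\frac{x}{r}\right)\;-\;2\,r^{n-1}\sum_{\substack{k:\ 2k+1\ge r\\ 2k\le n}}r^{-2k}\,\frac{B^{(r)}_{2k+1}}{2k+1}\binom{n}{2k}B_{n-2k}\!\left(\frac{x}{r}\right),$$ where for $2k+1\ge r$, $$\frac{B^{(r)}_{2k+1}}{2k+1}=\binom{2k}{r-1}\sum_{j=1}^{r}(-1)^{j-1}s(r,j)\,\frac{B_{2k+1-r+j}}{2k+1-r+j}.$$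
   Context: For a positive integer $r$, the Bernoulli polynomials of order $r$ are defined by $\sum_{n\ge0}B_n^{(r)}(x)\frac{t^n}{n!}=\left(\frac{t}{e^t-1}\right)^re^{xt}$, and $B_n^{(r)}=B_n^{(r)}(0)$. $B_n(x)=B_n^{(1)}(x)$ are the Bernoulli polynomials and $B_m=B_m(0)$ the Bernoulli numbers. $s(n,l)$ denotes the (signed) Stirling numbers of the first kind, $x(x-1)\cdots(x-n+1)=\sum_l s(n,l)x^l$. *)

From HB Require Import structures.
From mathcomp Require Import all_boot all_order all_algebra.
Set Implicit Arguments. Unset Strict Implicit. Unset Printing Implicit Defensive.
Import Order.TTheory GRing.Theory Num.Theory.
Local Open Scope ring_scope.

Definition stirling1 (n l : nat) : int :=
  (\prod_(i < n) ('X - (i%:R)%:P) : {poly int})`_l.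

(* Bernoulli numbers B_m, from t/(e^t-1) = \sum B_m t^m/m!, i.e. via the
   coefficient identity (e^t-1)/t * \sum B_m t^m/m! = 1:
   \sum_{k<=m} C(m+1,k) B_k = [m = 0]. *)
Fixpoint bern_seq (R : numFieldType) (m : nat) : seq R :=
  match m with
  | 0 => [:: 1]
  | m'.+1 => let s := bern_seq R m' in
      rcons s (- (m'.+2%:R)^-1 * \sum_(k < m'.+1) ('C(m'.+2, k))%:R * s`_k)
  end.

Definition bernoulli (R : numFieldType) (m : nat) : R := (bern_seq R m)`_m.

(* Bernoulli polynomials of order r, evaluated at x:
   \sum_n B_n^(r)(x) t^n/n! = (t/(e^t-1))^r e^{xt}.
   Order 0: e^{xt}, so B_n^(0)(x) = x^n; order r+1 is the Cauchy (EGF) product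
   of t/(e^t-1) with the order-r series. *)
Fixpoint bernpoly_ord (R : numFieldType) (r n : nat) (x : R) : R :=
  match r with
  | 0 => x ^+ n
  | r'.+1 => \sum_(k < n.+1) ('C(n, k))%:R * bernoulli R k * bernpoly_ord r' (n - k) x
  end.

Definition bernnum_ord (R : numFieldType) (r n : nat) : R := bernpoly_ord r n 0.

Definition bernpoly (R : numFieldType) (n : nat) (x : R) : R := bernpoly_ord 1 n x.

From HB Require Import structures.
From mathcomp Require Import all_boot all_order all_algebra.
From mathcomp Require Import ring zify.
Import Order.TTheory GRing.Theory Num.Theory.
Set Implicit Arguments. Unset Strict Implicit. Unset Printing Implicit Defensive.
Local Open Scope ring_scope.

(* Work with the exponential generating functions F(t) = t/(e^t - 1) and
   D(t) = (e^t - 1)/t, truncated modulo t^N.  From F D = 1 one gets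
   F(-t) = e^t F(t), hence F^r(-t) - F^r(t) = (e^{rt} - 1) F^r(t); multiplying
   by F(rt), which inverts (e^{rt} - 1)/(rt), and by e^{xt} = e^{(x/r)(rt)}
   expresses B_n^(r)(x) through the odd coefficients B^(r)_{2k+1} of F^r and
   the B_m(x/r).  The Euler operator identity t F' = F - F^2 - t F gives
     r B^(r+1)_m = (r - m) B^(r)_m - r m B^(r)_{m-1},
   and this recurrence, matched with s(r+1, l+1) = s(r, l) - r s(r, l+1),
   yields the closed forms of B^(r)_m for m < r and for m >= r. *)

Section PolyCoef.
Variable R : comNzRingType.
Implicit Types p : {poly R}.

Lemma coef_Xderiv p i : ('X * p^`())`_i = i%:R * p`_i.
Proof. by rewrite coefXM; case: i => [|i]; rewrite ?mul0r // coef_deriv mulr_natl. Qed.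

Lemma coef_comp_scaleX c p i : (p \Po (c *: 'X))`_i = c ^+ i * p`_i.
Proof.
rewrite coef_comp_poly; under eq_bigr do rewrite exprZn coefZ coefXn mulrCA.
have [lt_ip | le_pi] := ltnP i (size p).
  rewrite (bigD1 (Ordinal lt_ip)) //= eqxx mulr1 big1 ?addr0 // => j.
  by rewrite -val_eqE eq_sym => /negbTE /= ->; rewrite !mulr0.
rewrite nth_default // mulr0 big1 // => j _.
by rewrite (gtn_eqF (leq_trans (ltn_ord j) le_pi)) !mulr0.
Qed.

End PolyCoef.

Section PowerSeriesCongruence.
Variable R : fieldType.
Implicit Types p q : {poly R}.

Definition eqmodX N p q := p %% 'X^N = q %% 'X^N.

Lemma eqmodXP N p q : eqmodX N p q <-> forall i, (i < N)%N -> p`_i = q`_i.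
Proof.
rewrite /eqmodX -!Pdiv.IdomainMonic.take_poly_modp; split=> [eq_pq i lt_iN | eq_pq].
  by have := congr1 (coefp i) eq_pq; rewrite /= !coef_take_poly lt_iN.
by apply/polyP=> i; rewrite !coef_take_poly; case: ifP => // /eq_pq.
Qed.

Lemma eqmodX_trans N p q s : eqmodX N p q -> eqmodX N q s -> eqmodX N p s.
Proof. exact: etrans. Qed.

Lemma eqmodXD N p q p' q' :
  eqmodX N p p' -> eqmodX N q q' -> eqmodX N (p + q) (p' + q').
Proof. by rewrite /eqmodX !modpD => -> ->. Qed.

Lemma eqmodXN N p q : eqmodX N p q -> eqmodX N (- p) (- q).
Proof. by rewrite /eqmodX !modpN => ->. Qed.

Lemma eqmodXMn N p q n : eqmodX N p q -> eqmodX N (p *+ n) (q *+ n).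
Proof. by move=> eq_pq; elim: n => // n IHn; rewrite !mulrS; apply: eqmodXD. Qed.

Lemma eqmodXM N p q p' q' :
  eqmodX N p p' -> eqmodX N q q' -> eqmodX N (p * q) (p' * q').
Proof.
rewrite /eqmodX => eq_p eq_q.
rewrite -modp_mul eq_q modp_mul [p * _]mulrC [p' * _]mulrC.
by rewrite -modp_mul eq_p modp_mul.
Qed.

Lemma eqmodXX N p q k : eqmodX N p q -> eqmodX N (p ^+ k) (q ^+ k).
Proof. by move=> eq_pq; elim: k => // k IHk; rewrite !exprS; apply: eqmodXM. Qed.

Lemma eqmodX_Xderiv N p q : eqmodX N p q -> eqmodX N ('X * p^`()) ('X * q^`()).
Proof. by move/eqmodXP=> eq_pq; apply/eqmodXP=> i lt_iN; rewrite !coef_Xderiv eq_pq. Qed.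

Lemma eqmodX_comp_scaleX N c p q :
  eqmodX N p q -> eqmodX N (p \Po (c *: 'X)) (q \Po (c *: 'X)).
Proof.
by move/eqmodXP=> eq_pq; apply/eqmodXP=> i lt_iN; rewrite !coef_comp_scaleX eq_pq.
Qed.

End PowerSeriesCongruence.

Lemma sum_sign_binS (R : comPzRingType) i :
  \sum_(j < i.+1) (-1) ^+ j * 'C(i.+1, j.+1)%:R = 1 :> R.
Proof.
have := exprBn (1 : R) 1 i.+1; rewrite subrr expr0n big_ord_recl /= expr0 !expr1n.
rewrite !mulr1 bin0 mulr1n => /eqP; rewrite eq_sym addr_eq0 => /eqP sum_eq.
rewrite [RHS]sum_eq -sumrN; apply: eq_bigr => j _.
by rewrite /bump leq0n add1n !expr1n !mulr1 exprS mulN1r mulNrn opprK mulr_natr.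
Qed.

Lemma sum_ord_pairs (V : nmodType) K (g : nat -> V) :
  \sum_(i < 2 * K) g i = \sum_(k < K) (g (2 * k)%N + g (2 * k).+1).
Proof.
elim: K => [|K IHK]; first by rewrite muln0 !big_ord0.
by rewrite mulnS add2n !big_ord_recr /= IHK addrA.
Qed.

Lemma sum_nat_odd (V : nmodType) n (f : nat -> V) : (forall k, f (2 * k)%N = 0) ->
  \sum_(0 <= j < n.+2) f j = \sum_(k < n.+1 | (2 * k <= n)%N) f (2 * k + 1)%N.
Proof.
move=> f_even0; rewrite big_mkord (big_ord_widen (2 * n.+1) f); last by lia.
rewrite big_mkcond /= (sum_ord_pairs _ (fun i => if (i < n.+2)%N then f i else 0)).
rewrite [RHS]big_mkcond; apply: eq_bigr => k _.
by rewrite f_even0 if_same add0r addn1 !ltnS.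
Qed.

Lemma stirling1_rec r l : stirling1 r.+1 l =
  (if l is l'.+1 then stirling1 r l' else 0) - r%:R * stirling1 r l.
Proof.
rewrite /stirling1 big_ord_recr /= mulrBr coefB coefMX coefMC mulrC.
by case: l.
Qed.

Lemma stirling1S r l : stirling1 r.+1 l.+1 = stirling1 r l - r%:R * stirling1 r l.+1.
Proof. exact: stirling1_rec. Qed.

Lemma stirling1n0 r : stirling1 r.+1 0 = 0.
Proof.
elim: r => [|r IHr]; rewrite stirling1_rec ?IHr ?mulr0 ?subr0 //.
by rewrite /stirling1 big_ord0 coef1 mulr1 subrr.
Qed.

Lemma stirling1_small r l : (r < l)%N -> stirling1 r l = 0.
Proof.
elim: r l => [|r IHr] [|l] // lt_rl; first by rewrite /stirling1 big_ord0 coef1.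
by rewrite stirling1S !IHr ?mulr0 ?subr0 // ltnW.
Qed.

Lemma stirling1nn r : stirling1 r r = 1.
Proof.
elim: r => [|r IHr]; first by rewrite /stirling1 big_ord0 coef1.
by rewrite stirling1S IHr stirling1_small // mulr0 subr0.
Qed.

Section BernoulliNumbers.
Variable R : numFieldType.

Lemma natf_fact_neq0 n : n`!%:R != 0 :> R.
Proof. by rewrite pnatr_eq0 -lt0n fact_gt0. Qed.

Lemma natf_bin_div_fact n k : (k <= n)%N ->
  'C(n, k)%:R / n`!%:R = (k`!%:R)^-1 * ((n - k)`!%:R)^-1 :> R.
Proof.
move=> le_kn; rewrite -(bin_fact le_kn) !natrM.
by field; rewrite !natf_fact_neq0 pnatr_eq0 -lt0n bin_gt0 le_kn.
Qed.

Lemma intr_stirling1S r l : (stirling1 r.+1 l.+1)%:~R =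
  (stirling1 r l)%:~R - r%:R * (stirling1 r l.+1)%:~R :> R.
Proof. by rewrite stirling1S intrB intrM /= mulrz_nat. Qed.

Lemma size_bern_seq m : size (bern_seq R m) = m.+1.
Proof. by elim: m => //= m IHm; rewrite size_rcons IHm. Qed.

Lemma nth_bern_seq m k : (k <= m)%N -> (bern_seq R m)`_k = bernoulli R k.
Proof.
elim: m => [|m IHm]; first by rewrite leqn0 => /eqP->.
rewrite leq_eqVlt => /predU1P[-> //|lt_km].
by rewrite [bern_seq _ _]/= nth_rcons size_bern_seq lt_km IHm.
Qed.

Lemma bernoulliS m : bernoulli R m.+1 =
  - (m.+2%:R)^-1 * \sum_(k < m.+1) 'C(m.+2, k)%:R * bernoulli R k.
Proof.
rewrite {1}/bernoulli [bern_seq _ m.+1]/= nth_rcons size_bern_seq ltnn eqxx.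
by apply: congr1; apply: eq_bigr => k _; rewrite nth_bern_seq // -ltnS.
Qed.

Lemma bernoulli_rec m :
  \sum_(k < m.+1) 'C(m.+1, k)%:R * bernoulli R k = (m == 0)%:R.
Proof.
case: m => [|m]; first by rewrite big_ord1 mulr1.
rewrite big_ord_recr binSn bernoulliS; set S := \sum_(_ < _) _.
by rewrite mulrA mulrN divff ?pnatr_eq0 // mulN1r; apply: addrN.
Qed.

Lemma bernnum_ord1 m : bernnum_ord R 1 m = bernoulli R m.
Proof.
rewrite /bernnum_ord /= big_ord_recr /= subnn binn mulr1 mul1r big1 ?add0r // => k _.
by rewrite expr0n subn_eq0 leqNgt ltn_ord mulr0.
Qed.

End BernoulliNumbers.

Section TruncatedEGF.
Variables (R : numFieldType) (N : nat).

Definition bernoulli_egf : {poly R} := \poly_(i < N) (bernoulli R i / i`!%:R).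
Definition exp_egf (c : R) : {poly R} := \poly_(i < N) (c ^+ i / i`!%:R).
Definition expm1_div_egf : {poly R} := \poly_(i < N) (i.+1`!%:R)^-1.

Local Notation F := bernoulli_egf.
Local Notation E := exp_egf.
Local Notation D := expm1_div_egf.

Lemma bernoulli_egfM_expm1_div : eqmodX N (F * D) 1.
Proof.
apply/eqmodXP=> i lt_iN; rewrite coefM coef1.
transitivity ((i.+1`!%:R)^-1 * \sum_(k < i.+1) 'C(i.+1, k)%:R * bernoulli R k).
  rewrite mulr_sumr; apply: eq_bigr => -[k /= lt_ki] _.
  rewrite !coef_poly (leq_ltn_trans (leq_subr k i) lt_iN) (leq_ltn_trans _ lt_iN) //.
  rewrite mulrA [_^-1 * 'C(_, _)%:R]mulrC natf_bin_div_fact 1?ltnW // subSn //; ring.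
by rewrite bernoulli_rec; case: i {lt_iN} => [|i]; rewrite ?mulr0 ?mulr1 ?invr1.
Qed.

Lemma exp_egfD c d : eqmodX N (E c * E d) (E (c + d)).
Proof.
apply/eqmodXP=> i lt_iN; rewrite coefM coef_poly lt_iN addrC exprDn mulr_suml.
apply: eq_bigr => -[j /= lt_ji] _.
rewrite !coef_poly (leq_ltn_trans (leq_subr j i) lt_iN) (leq_ltn_trans _ lt_iN) //.
by rewrite -[_ *+ 'C(_, _)]mulr_natr -[RHS]mulrA natf_bin_div_fact //; ring.
Qed.

Lemma exp_egf0 : eqmodX N (E 0) 1.
Proof.
apply/eqmodXP=> i lt_iN; rewrite coef_poly lt_iN coef1.
by case: i {lt_iN} => [|i]; rewrite ?expr0 ?divr1 // expr0n mul0r.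
Qed.

Lemma exp_egf_nat r : eqmodX N (E 1 ^+ r) (E r%:R).
Proof.
elim: r => [|r IHr]; first exact: esym exp_egf0.
by rewrite exprSr -natr1; apply: eqmodX_trans (exp_egfD _ _); apply: eqmodXM.
Qed.

Lemma exp_egf_scale c d : E (c * d) = E c \Po (d *: 'X).
Proof.
apply/polyP=> i; rewrite coef_comp_scaleX !coef_poly exprMn.
by case: ifP; rewrite ?mulr0 // mulrCA mulrA.
Qed.

Lemma exp_egf_sub1 : eqmodX N (E 1 - 1) ('X * D).
Proof.
apply/eqmodXP=> i lt_iN; rewrite coefB coefXM coef_poly lt_iN coef1 expr1n.
case: i lt_iN => [|i] lt_iN; first by rewrite divr1 subrr.
by rewrite coef_poly ltnW // subr0 mul1r.
Qed.

Lemma Xderiv_expm1_div_egf : eqmodX N ('X * D^`()) (E 1 - D).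
Proof.
apply/eqmodXP=> i lt_iN; rewrite coef_Xderiv coefB !coef_poly lt_iN expr1n.
by rewrite factS natrM; field; rewrite natf_fact_neq0 -mulrS pnatr_eq0.
Qed.

Lemma expm1_div_egf_reflect : eqmodX N ((D \Po ((-1) *: 'X)) * E 1) D.
Proof.
apply/eqmodXP=> i lt_iN; rewrite coefM coef_poly lt_iN.
transitivity ((\sum_(j < i.+1) (-1) ^+ j * 'C(i.+1, j.+1)%:R) / i.+1`!%:R : R);
  last by rewrite sum_sign_binS mul1r.
rewrite mulr_suml; apply: eq_bigr => -[j /= lt_ji] _.
rewrite coef_comp_scaleX !coef_poly expr1n.
rewrite (leq_ltn_trans (leq_subr j i) lt_iN) (leq_ltn_trans _ lt_iN) 1?ltnS //.
by rewrite mulrCA -mulrA [_ * _^-1]mulrC natf_bin_div_fact // subSS; ring.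
Qed.

Lemma bernoulli_egf_reflect : eqmodX N (F \Po ((-1) *: 'X)) (E 1 * F).
Proof.
set m : {poly R} := (-1) *: 'X.
have FDm1 : eqmodX N ((F * D) \Po m) 1.
  rewrite -(rmorph1 (comp_poly m)).
  exact: eqmodX_comp_scaleX bernoulli_egfM_expm1_div.
apply: (@eqmodX_trans _ _ _ ((F \Po m) * ((D \Po m) * E 1 * F))).
  rewrite -[X in eqmodX _ X _]mulr1; apply: eqmodXM => //.
  apply: eqmodX_trans (esym bernoulli_egfM_expm1_div) _; rewrite [F * D]mulrC.
  by apply: eqmodXM => //; apply: esym; apply: expm1_div_egf_reflect.
have -> : (F \Po m) * ((D \Po m) * E 1 * F) = ((F * D) \Po m) * (E 1 * F).
  by rewrite comp_polyM; ring.
by rewrite -[X in eqmodX _ _ X]mul1r; apply: eqmodXM.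
Qed.

Lemma Xderiv_bernoulli_egf : eqmodX N ('X * F^`()) (F - F ^+ 2 - 'X * F).
Proof.
have FD1 := bernoulli_egfM_expm1_div.
have XdD : eqmodX N ('X * D^`()) (1 + 'X * D - D).
  apply: eqmodX_trans Xderiv_expm1_div_egf _; apply: eqmodXD => //.
  by rewrite -(addrNK 1 (E 1)) addrC; apply: eqmodXD => //; apply: exp_egf_sub1.
have XdF_D : eqmodX N ('X * F^`() * D) (- F * (1 + 'X * D - D)).
  have := eqmodX_Xderiv FD1; rewrite -polyC1 derivC derivM mulr0 mulrDr => XdFD.
  have -> : 'X * F^`() * D = 'X * (F^`() * D) + 'X * (F * D^`()) - F * ('X * D^`()).
    by ring.
  rewrite -[X in eqmodX _ _ X]add0r mulNr.
  by apply: eqmodXD => //; apply: eqmodXN; apply: eqmodXM.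
apply: (@eqmodX_trans _ _ _ ('X * F^`() * D * F)).
  rewrite -mulrA -[X in eqmodX _ X _]mulr1; apply: eqmodXM => //.
  by rewrite mulrC; apply: esym.
apply: (@eqmodX_trans _ _ _ (- F ^+ 2 + (F - 'X * F) * (F * D))).
  have -> : - F ^+ 2 + (F - 'X * F) * (F * D) = - F * (1 + 'X * D - D) * F by ring.
  exact: eqmodXM XdF_D (erefl _).
rewrite [X in eqmodX _ _ X](_ : _ = - F ^+ 2 + (F - 'X * F) * 1); last by ring.
by apply: eqmodXD => //; apply: eqmodXM.
Qed.

Lemma Xderiv_bernoulli_egfX r :
  eqmodX N ('X * (F ^+ r)^`()) ((F ^+ r - F ^+ r.+1 - 'X * F ^+ r) *+ r).
Proof.
case: r => [|r]; first by rewrite expr0 -polyC1 derivC mulr0.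
rewrite deriv_exp mulrnAr mulrA; apply: eqmodXMn.
have -> : F ^+ r.+1 - F ^+ r.+2 - 'X * F ^+ r.+1 = (F - F ^+ 2 - 'X * F) * F ^+ r.
  by rewrite !exprS; ring.
by apply: eqmodXM => //; apply: Xderiv_bernoulli_egf.
Qed.

Lemma bernoulli_egfX_reflect r :
  eqmodX N ((F \Po (r%:R *: 'X)) * (F ^+ r \Po ((-1) *: 'X) - F ^+ r))
           ((r%:R *: 'X) * F ^+ r).
Proof.
set rX : {poly R} := r%:R *: 'X.
have Fr_reflect : eqmodX N (F ^+ r \Po ((-1) *: 'X)) (E r%:R * F ^+ r).
  rewrite rmorphXn; apply: eqmodX_trans (eqmodXX r bernoulli_egf_reflect) _.
  by rewrite exprMn; apply: eqmodXM => //; apply: exp_egf_nat.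
have Er_sub1 : eqmodX N (E r%:R - 1) (rX * (D \Po rX)).
  rewrite -[r%:R]mul1r exp_egf_scale -(rmorph1 (comp_poly rX)) -rmorphB.
  apply: eqmodX_trans (eqmodX_comp_scaleX _ exp_egf_sub1) _.
  by rewrite rmorphM /= comp_polyX.
have FDr1 : eqmodX N ((F * D) \Po rX) 1.
  rewrite -(rmorph1 (comp_poly rX)).
  exact: eqmodX_comp_scaleX bernoulli_egfM_expm1_div.
apply: (@eqmodX_trans _ _ _ ((F \Po rX) * ((E r%:R - 1) * F ^+ r))).
  by apply: eqmodXM => //; rewrite mulrBl mul1r; apply: eqmodXD.
apply: (@eqmodX_trans _ _ _ ((F \Po rX) * (rX * (D \Po rX) * F ^+ r))).
  by apply: eqmodXM => //; apply: eqmodXM.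
have -> : (F \Po rX) * (rX * (D \Po rX) * F ^+ r) = ((F * D) \Po rX) * (rX * F ^+ r).
  by rewrite rmorphM /=; ring.
by rewrite -[X in eqmodX _ _ X]mul1r; apply: eqmodXM.
Qed.

Lemma coef_bernoulli_egfX_exp r x i : (i < N)%N ->
  (F ^+ r * E x)`_i = bernpoly_ord r i x / i`!%:R.
Proof.
elim: r i => [|r IHr] i lt_iN; first by rewrite mul1r coef_poly lt_iN.
rewrite exprS -mulrA coefM [bernpoly_ord r.+1 _ _]/= mulr_suml.
apply: eq_bigr => -[j /= lt_ji] _.
rewrite coef_poly IHr ?(leq_ltn_trans (leq_subr j i)) // (leq_ltn_trans _ lt_iN) //.
rewrite [RHS](mulrAC _ _ (i`!%:R^-1)) (mulrAC 'C(i, j)%:R) natf_bin_div_fact //.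
ring.
Qed.

Lemma coef_bernoulli_egfX r i : (i < N)%N ->
  (F ^+ r)`_i = bernnum_ord R r i / i`!%:R.
Proof.
move=> lt_iN; rewrite /bernnum_ord -(coef_bernoulli_egfX_exp r 0 lt_iN).
rewrite -[in LHS](mulr1 (_ ^+ r)); apply: (eqmodXP _ _ _).1 i lt_iN.
by apply: eqmodXM => //; apply: esym; apply: exp_egf0.
Qed.

End TruncatedEGF.

Section BernoulliOrder.
Variable R : numFieldType.

Lemma bernnum_ord_rec r m : r%:R * bernnum_ord R r.+1 m =
  (r%:R - m%:R) * bernnum_ord R r m - r%:R * m%:R * bernnum_ord R r m.-1.
Proof.
have := (eqmodXP _ _ _).1 (Xderiv_bernoulli_egfX R m.+1 r) m (ltnSn m).
rewrite coef_Xderiv coefMn !coefB coefXM.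
have -> : (if m == 0%N then 0 else (bernoulli_egf R m.+1 ^+ r)`_m.-1) =
          m%:R * bernnum_ord R r m.-1 / m`!%:R.
  case: m => [|m]; first by rewrite !mul0r.
  rewrite coef_bernoulli_egfX // factS natrM.
  by field; rewrite natf_fact_neq0 -mulrS pnatr_eq0.
rewrite !coef_bernoulli_egfX // -[_ *+ r]mulr_natl.
move=> /(congr1 ( *%R^~ m`!%:R)).
rewrite -!mulrA !mulrBl !mulrA !divfK ?natf_fact_neq0 // => coef_eq.
by rewrite coef_eq; ring.
Qed.

Lemma bernnum_ord_small r m : (m <= r)%N ->
  'C(r, m)%:R * bernnum_ord R r.+1 m = (stirling1 r.+1 (r.+1 - m))%:~R.
Proof.
elim: r m => [|r IHr] m le_mr.
  by move: le_mr; rewrite leqn0 => /eqP->; rewrite bernnum_ord1 mulr1 stirling1nn.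
have IHm : 'C(r, m)%:R * bernnum_ord R r.+1 m = (stirling1 r.+1 (r.+1 - m))%:~R.
  have [le_mr' | lt_rm] := leqP m r; first exact: IHr.
  have -> : m = r.+1 by lia.
  by rewrite bin_small // mul0r subnn stirling1n0.
have IHm1 : m%:R * 'C(r.+1, m)%:R * bernnum_ord R r.+1 m.-1 =
    r.+1%:R * (stirling1 r.+1 (r.+1 - m).+1)%:~R.
  case: m le_mr {IHm} => [|m] le_mr.
    by rewrite subn0 stirling1_small ?mul0r ?mulr0.
  by rewrite -natrM -mul_bin_diag natrM -mulrA IHr // subSS subSn.
have bin_down : 'C(r.+1, m)%:R * (r.+1%:R - m%:R) = r.+1%:R * 'C(r, m)%:R :> R.
  by rewrite -natrB // -!natrM mulnC -mul_bin_down.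
apply: (@mulfI _ r.+1%:R); first by rewrite pnatr_eq0.
rewrite mulrCA bernnum_ord_rec.
transitivity ('C(r.+1, m)%:R * (r.+1%:R - m%:R) * bernnum_ord R r.+1 m
  - r.+1%:R * (m%:R * 'C(r.+1, m)%:R * bernnum_ord R r.+1 m.-1)); first by ring.
by rewrite bin_down IHm1 (subSn le_mr) (intr_stirling1S R r.+1) -IHm; ring.
Qed.

Lemma bernnum_ord_smallE r m : (m < r)%N ->
  bernnum_ord R r m = (stirling1 r (r - m))%:~R / 'C(r.-1, m)%:R.
Proof.
case: r => // r le_mr /=; rewrite -bernnum_ord_small // mulrC mulKf //.
by rewrite pnatr_eq0 -lt0n bin_gt0.
Qed.

Definition stirling_bernoulli_sum r d : R := \sum_(1 <= j < r.+1)
  (-1) ^+ (j - 1) * (stirling1 r j)%:~R * (bernoulli R (d + j) / (d + j)%:R).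

Lemma stirling_bernoulli_sumE r d : stirling_bernoulli_sum r d =
  \sum_(i < r) (-1) ^+ i * (stirling1 r i.+1)%:~R
               * (bernoulli R (d + i.+1) / (d + i.+1)%:R).
Proof.
rewrite /stirling_bernoulli_sum big_add1 big_mkord /=.
by apply: eq_bigr => i _; rewrite subn1.
Qed.

Lemma stirling_bernoulli_sumS r d : (0 < r)%N ->
  stirling_bernoulli_sum r.+1 d =
    - stirling_bernoulli_sum r d.+1 - r%:R * stirling_bernoulli_sum r d.
Proof.
case: r => // r _; rewrite !stirling_bernoulli_sumE.
under eq_bigr do rewrite intr_stirling1S mulrBr mulrBl.
rewrite sumrB mulr_sumr; congr (_ - _).
  rewrite big_ord_recl stirling1n0 mulr0 mul0r add0r -sumrN.
  by apply: eq_bigr => i _; rewrite lift0 exprS addSnnS; ring.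
rewrite [LHS]big_ord_recr stirling1_small // !mulr0 mul0r /= addr0.
by apply: eq_bigr => i _; ring.
Qed.

Lemma bernnum_ord_large_rec r d : bernnum_ord R r.+1 (r.+1 + d) =
  (r.+1 + d)%:R * 'C(r + d, r)%:R * stirling_bernoulli_sum r.+1 d.
Proof.
elim: r d => [|r IHr] d.
  rewrite bernnum_ord1 stirling_bernoulli_sumE big_ord1 stirling1nn bin0 add1n addn1.
  by field; rewrite -mulrS pnatr_eq0.
apply: (@mulfI _ r.+1%:R); first by rewrite pnatr_eq0.
rewrite bernnum_ord_rec.
have -> : ((r.+2 + d).-1 = r.+1 + d)%N by rewrite addSn.
have -> : (r.+2 + d = r.+1 + d.+1)%N by rewrite addSnnS.
rewrite !IHr (@stirling_bernoulli_sumS r.+1 d) //.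
have bin_left : d.+1%:R * 'C(r + d.+1, r)%:R = r.+1%:R * 'C(r.+1 + d, r.+1)%:R :> R.
  by rewrite -!natrM mul_bin_left addSn -addnS addKn.
have bin_diag : (r.+1 + d)%:R * 'C(r + d, r)%:R = r.+1%:R * 'C(r.+1 + d, r.+1)%:R :> R.
  by rewrite -!natrM -mul_bin_diag.
transitivity (- (d.+1%:R * 'C(r + d.+1, r)%:R) * (r.+1 + d.+1)%:R
  * stirling_bernoulli_sum r.+1 d.+1
  - r.+1%:R * (r.+1 + d.+1)%:R * ((r.+1 + d)%:R * 'C(r + d, r)%:R)
  * stirling_bernoulli_sum r.+1 d); first by ring.
by rewrite bin_left bin_diag; ring.
Qed.

Lemma bernnum_ord_large r m : (0 < r <= m)%N ->
  bernnum_ord R r m / m%:R = 'C(m.-1, r.-1)%:R * stirling_bernoulli_sum r (m - r).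
Proof.
case: r => // r /andP[_ le_rm]; have [d ->] : exists d, m = (r.+1 + d)%N.
  by exists (m - r.+1)%N; rewrite subnKC.
rewrite bernnum_ord_large_rec addKn addSn /=.
by field; rewrite -natrD -mulrS pnatr_eq0.
Qed.

Lemma bernpoly_ord_odd_sum r n x : (0 < r)%N ->
  r%:R * bernpoly_ord r n x / n`!%:R =
  \sum_(0 <= j < n.+2) ((-1) ^+ j - 1) * (bernnum_ord R r j / j`!%:R)
     * (r%:R ^+ (n.+1 - j) * (bernpoly (n.+1 - j) (x / r%:R) / (n.+1 - j)`!%:R)).
Proof.
move=> r_gt0; have r_neq0 : r%:R != 0 :> R by rewrite pnatr_eq0 -lt0n.
set F := bernoulli_egf R n.+2; set P := F ^+ r \Po ((-1) *: 'X) - F ^+ r.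
have := eqmodXM (bernoulli_egfX_reflect R n.+2 r) (erefl (exp_egf n.+2 x %% 'X^(n.+2))).
rewrite -/F -/P => /eqmodXP /(_ n.+1 (ltnSn _)) coef_eq.
have Xcoef : ((r%:R *: 'X) * F ^+ r * exp_egf n.+2 x)`_n.+1 =
    r%:R * (bernpoly_ord r n x / n`!%:R).
  by rewrite -!scalerAl coefZ -mulrA coefXM coef_bernoulli_egfX_exp.
rewrite -mulrA -Xcoef -coef_eq.
rewrite -{1}[x](divfK r_neq0) exp_egf_scale mulrAC -rmorphM mulrC coefM big_mkord.
apply: eq_bigr => -[j /= lt_jn] _.
rewrite coef_comp_scaleX -[F]expr1 coef_bernoulli_egfX_exp ?ltnS ?leq_subr //.
by rewrite /P coefB coef_comp_scaleX coef_bernoulli_egfX // /bernpoly; ring.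
Qed.

(* [0 < n] is needed: the factor r^{n-1} stands for r^n / r, which differs
   from [r%:R ^+ n.-1] at n = 0. *)
Lemma bernpoly_ord_expansion r n x : (0 < r)%N -> (0 < n)%N ->
  bernpoly_ord r n x = - 2%:R * r%:R ^+ n.-1 *
    \sum_(k < n.+1 | (2 * k <= n)%N)
      (r%:R ^+ (2 * k))^-1 * (bernnum_ord R r (2 * k + 1) / (2 * k + 1)%:R)
      * 'C(n, 2 * k)%:R * bernpoly (n - 2 * k) (x / r%:R).
Proof.
move=> r_gt0 n_gt0; have r_neq0 : r%:R != 0 :> R by rewrite pnatr_eq0 -lt0n.
have := bernpoly_ord_odd_sum n x r_gt0.
rewrite sum_nat_odd => [odd_sum | k]; last first.
  by rewrite exprM sqrrN !expr1n subrr !mul0r.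
apply: (@mulfI _ (r%:R / n`!%:R)); first by rewrite mulf_neq0 ?invr_eq0 ?natf_fact_neq0.
rewrite mulrAC odd_sum !mulr_sumr; apply: eq_bigr => -[k /= _] le_kn.
have r_pow : r%:R ^+ n.-1 = r%:R ^+ (n - 2 * k) * r%:R ^+ (2 * k) / r%:R :> R.
  by rewrite -exprD subnK // -[in RHS](prednK n_gt0) exprSr mulfK.
have binE : 'C(n, 2 * k)%:R = n`!%:R / ((2 * k)`!%:R * (n - 2 * k)`!%:R) :> R.
  by rewrite -(bin_fact le_kn) !natrM mulfK // mulf_neq0 ?natf_fact_neq0.
rewrite r_pow binE addn1 subSS exprS mulN1r exprM sqrrN !expr1n factS natrM.
by field; rewrite r_neq0 expf_neq0 // !natf_fact_neq0 -natrM -mulrS pnatr_eq0.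
Qed.

End BernoulliOrder.

Theorem mainTheorem7 (R : numFieldType) (n r : nat) (x : R)
  (hr : (2 <= r)%N) (hnr : (r <= n)%N) :
  bernpoly_ord r n x =
    - 2%:R * r%:R ^+ n.-1 *
      \sum_(k < r | (2 * k + 1 <= r - 1)%N)
        (r%:R ^+ (2 * k))^-1 * ((stirling1 r (r - (2 * k + 1)))%:~R / (2 * k + 1)%:R)
        * (('C(n, 2 * k))%:R / ('C(r - 1, 2 * k + 1))%:R)
        * bernpoly (n - 2 * k) (x / r%:R)
    - 2%:R * r%:R ^+ n.-1 *
      \sum_(k < n.+1 | (r <= 2 * k + 1)%N && (2 * k <= n)%N)
        (r%:R ^+ (2 * k))^-1 * (bernnum_ord R r (2 * k + 1) / (2 * k + 1)%:R)
        * ('C(n, 2 * k))%:R * bernpoly (n - 2 * k) (x / r%:R)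
  /\
  (forall k : nat, (r <= 2 * k + 1)%N ->
     bernnum_ord R r (2 * k + 1) / (2 * k + 1)%:R =
       ('C(2 * k, r - 1))%:R *
       \sum_(1 <= j < r.+1)
         (-1) ^+ (j - 1) * (stirling1 r j)%:~R
         * (bernoulli R (2 * k + 1 - r + j) / (2 * k + 1 - r + j)%:R)).
Proof.
have r_gt0 : (0 < r)%N by apply: leq_trans hr.
split=> [|k le_r_2k1]; last by rewrite bernnum_ord_large ?r_gt0 // addn1 subn1.
rewrite bernpoly_ord_expansion ?(leq_trans r_gt0) //.
rewrite (bigID (fun k : 'I_n.+1 => (r <= 2 * k + 1)%N)) /= mulrDr addrC -mulNr.
congr (_ + _); last by rewrite mulNr (eq_bigl _ _ (fun k => andbC _ _)).
rewrite (eq_bigl (fun k : 'I_n.+1 => (2 * k + 1 <= r - 1)%N && (k < r)%N)) => [|k];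
  last by lia.
rewrite (big_ord_narrow_cond (leq_trans hnr (leqnSn n))) /=.
apply: congr1; apply: eq_bigr => k small_k.
by rewrite bernnum_ord_smallE -?subn1; [ring | lia].
Qed.
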